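(* Let $n\ge1$, let $\mathcal W$ be an $(n,T(n))$-weakly Ramsey non-P-point in standard position on $\omega^2$, let $\tau$ be any $n$-type, and let $[\omega^2]_\tau$ be partitioned into finitely many pieces. Then there is $H\in\mathcal W$ such that $[H]_\tau$ is included in one of the pieces.
   Context: Ultrafilters are nonprincipal. A non-P-point in standard position is an ultrafilter $\mathcal W$ on $\omega^2$ such that the first projection $\pi_1:\omega^2\to\omega$ is neither finite-to-one nor constant on any set in $\mathcal W$. For a countably infinite set $S$, an ultrafilter $\mathcal W$ on $S$ is $(n,t)$-weakly Ramsey if whenever $[S]^n$ (the $n$-element subsets of $S$) is partitioned into finitely many pieces, there is $H\in\mathcal W$ with $[H]^n$ meeting at most $t$ pieces. An $n$-type is a linear pre-order of the $2n$ formal symbols $x_1,\dots,x_n,y_1,\dots,y_n$ such that $y_1<\dots<y_n$ (strictly), each $x_i<y_i$ strictly, and any two distinct equivalent symbols are both $x$'s. An $n$-element set $\{\langle a_1,b_1\rangle,\dots,\langle a_n,b_n\rangle\}\subseteq\omega^2$, listed so that $b_1<\dots<b_n$ (which requires distinct second coordinates), realizes the $n$-type $\tau$ if for all symbols $s,t$ we have $s\le_\tau t$ iff $v(s)\le v(t)$, where $v(x_i)=a_i$, $v(y_i)=b_i$. $T(n)$ is the number of $n$-types. For $S\subseteq\omega^2$, $[S]_\tau$ is the set of $n$-element subsets of $S$ realizing $\tau$. *)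

From HB Require Import structures.
From mathcomp Require Import all_boot.
Set Implicit Arguments.
Unset Strict Implicit.
Unset Printing Implicit Defensive.

(* omega^2 = nat * nat; subsets of omega^2 are predicates. *)
Definition point := (nat * nat)%type.
Definition pset := point -> Prop.

Record ultrafilter (W : pset -> Prop) : Prop := {
  uf_full : W (fun _ => True);
  uf_proper : ~ W (fun _ => False);
  uf_up : forall A B : pset, (forall x, A x -> B x) -> W A -> W B;
  uf_cap : forall A B : pset, W A -> W B -> W (fun x => A x /\ B x);
  uf_ultra : forall A : pset, W A \/ W (fun x => ~ A x)
}.

(* Nonprincipal: no singleton belongs to W (equivalently every co-singleton does). *)
Definition nonprincipal (W : pset -> Prop) : Prop :=
  forall x : point, W (fun y => y <> x).

Definition pi1_constant_on (X : pset) : Prop :=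
  exists a, forall p, X p -> p.1 = a.
Definition pi1_finite_to_one_on (X : pset) : Prop :=
  forall a, exists m, forall p, X p -> p.1 = a -> p.2 < m.
Definition non_P_point_std (W : pset -> Prop) : Prop :=
  forall X, W X -> ~ pi1_constant_on X /\ ~ pi1_finite_to_one_on X.

(* Canonical representation of finite subsets of omega^2: lists strictly
   sorted in lexicographic order. *)
Definition lexlt : rel point :=
  fun p q => (p.1 < q.1) || ((p.1 == q.1) && (p.2 < q.2)).

Definition nsubset (n : nat) (S : pset) (s : seq point) : Prop :=
  [/\ sorted lexlt s, size s = n & forall x, x \in s -> S x].

(* (n,t)-weakly Ramsey: every partition of [omega^2]^n into finitely many
   pieces (a colouring c into 'I_k) has a homogeneous-ish H in W with
   [H]^n meeting at most t pieces. *)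
Definition weakly_ramsey (n t : nat) (W : pset -> Prop) : Prop :=
  forall (k : nat) (c : seq point -> 'I_k),
    exists H : pset, W H /\
      exists C : {set 'I_k}, #|C| <= t /\
        forall s, nsubset n H s -> c s \in C.

(* n-types.  Symbols: inl i = x_(i+1), inr i = y_(i+1). *)
Definition sym (n : nat) := ('I_n + 'I_n)%type.
Definition ntype_rel (n : nat) := {ffun (sym n * sym n) -> bool}.

Definition is_xsym n (s : sym n) : bool := if s is inl _ then true else false.

Definition is_ntype n (r : ntype_rel n) : bool :=
  let strict s t := r (s, t) && ~~ r (t, s) in
  [&& [forall s : sym n, r (s, s)],
      [forall s : sym n, forall t : sym n, forall u : sym n,
          r (s, t) ==> r (t, u) ==> r (s, u)],
      [forall s : sym n, forall t : sym n, r (s, t) || r (t, s)],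
      [forall i : 'I_n, forall j : 'I_n,
          (i < j) ==> strict (inr i) (inr j)],
      [forall i : 'I_n, strict (inl i) (inr i)] &
      [forall s : sym n, forall t : sym n,
          [&& r (s, t), r (t, s) & s != t] ==> (is_xsym s && is_xsym t)]].

Definition T (n : nat) : nat := #|[pred r : ntype_rel n | is_ntype r]|.

Definition sym_val n (t : seq point) (s : sym n) : nat :=
  match s with
  | inl i => (nth (0, 0) t i).1
  | inr i => (nth (0, 0) t i).2
  end.

Definition realizes n (r : ntype_rel n) (s : seq point) : Prop :=
  exists t : seq point,
    [/\ perm_eq s t, sorted (fun p q : point => p.2 < q.2) t &
        forall a b : sym n, r (a, b) = (sym_val t a <= sym_val t b)].

From mathcomp Require Import all_boot zify.
From Stdlib Require Import ClassicalEpsilon Classical.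
Set Implicit Arguments.
Unset Strict Implicit.

(* Colour an n-set by its type together with, for sets of type tau only, its
   given colour.  Every W-large set H contains infinitely many infinite
   columns (W is a non-P-point in standard position), which is enough room to
   realize every n-type inside H.  So on [H]^n all T(n) types occur, each
   contributing at least one colour; if the (n, T(n))-weakly Ramsey set H
   carried two colours on [H]_tau, [H]^n would meet T(n) + 1 colours. *)

Section NType.
Variables (n : nat) (r : ntype_rel n).
Hypothesis r_ntype : is_ntype r.

Lemma ntype_trans s t u : r (s, t) -> r (t, u) -> r (s, u).
Proof.
case/and5P: r_ntype => _ /forallP/(_ s)/forallP/(_ t)/forallP/(_ u) h _ _ _.
by move=> /(implyP h)/implyP.
Qed.

Lemma ntype_total s t : r (s, t) || r (t, s).
Proof. by case/and5P: r_ntype => _ _ /forallP/(_ s)/forallP/(_ t). Qed.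

Lemma ntype_y_lt (i j : 'I_n) : i < j -> ~~ r (inr j, inr i).
Proof.
by case/and5P: r_ntype => _ _ _ /forallP/(_ i)/forallP/(_ j)/implyP h _ /h/andP[].
Qed.

Lemma ntype_x_lt_y (i : 'I_n) : ~~ r (inr i, inl i).
Proof. by case/and5P: r_ntype => _ _ _ _ /andP[/forallP/(_ i)/andP[]]. Qed.

Lemma ntype_tie_xsym s t :
  r (s, t) -> r (t, s) -> s != t -> is_xsym s && is_xsym t.
Proof.
case/and5P: r_ntype => _ _ _ _ /andP[_ /forallP/(_ s)/forallP/(_ t)/implyP h].
by move=> st ts nst; apply: h; rewrite st ts nst.
Qed.

Definition ntype_rank (s : sym n) := #|[pred u | r (u, s) && ~~ r (s, u)]|.

Lemma ntype_le_rank a b : r (a, b) = (ntype_rank a <= ntype_rank b).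
Proof.
have [ab|nab] := boolP (r (a, b)).
  apply/esym/subset_leq_card/subsetP => u; rewrite !inE => /andP[ua nau].
  rewrite (ntype_trans ua ab) /=; apply: contra nau; exact: ntype_trans.
have ba : r (b, a) by move: (ntype_total a b); rewrite (negbTE nab).
apply/esym/negbTE; rewrite -ltnNge; apply/proper_card/properP; split.
  apply/subsetP => u; rewrite !inE => /andP[ub nbu].
  rewrite (ntype_trans ub ba) /=; apply: contra nab => au; exact: ntype_trans au ub.
by exists b; [rewrite inE ba nab | rewrite inE andbN].
Qed.

Lemma ntype_rank_tie a b :
  ntype_rank a = ntype_rank b -> a != b -> is_xsym a && is_xsym b.
Proof. by move=> e; apply: ntype_tie_xsym; rewrite ntype_le_rank e. Qed.

Lemma ntype_rank_x_lt_y (i : 'I_n) : ntype_rank (inl i) < ntype_rank (inr i).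
Proof. by rewrite ltnNge -ntype_le_rank ntype_x_lt_y. Qed.

Lemma ntype_rank_y_lt (i j : 'I_n) : i < j -> ntype_rank (inr i) < ntype_rank (inr j).
Proof. by move=> ij; rewrite ltnNge -ntype_le_rank ntype_y_lt. Qed.

Lemma ntype_rank_inr_inj : injective (fun j : 'I_n => ntype_rank (inr j)).
Proof.
move=> i j /= eij.
by have [/ntype_rank_y_lt|/ntype_rank_y_lt|/val_inj] := ltngtP i j; rewrite ?eij ?ltnn.
Qed.

Lemma ntype_rank_inl_inr (i j : 'I_n) : ntype_rank (inl i) != ntype_rank (inr j).
Proof. by apply/eqP => /ntype_rank_tie/(_ isT). Qed.

End NType.

Definition infinite_column (H : pset) (a : nat) :=
  forall m, exists b, m <= b /\ H (a, b).

Section Columns.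
Variable W : pset -> Prop.
Hypothesis W_uf : ultrafilter W.

Lemma ultrafilter_column (M : nat) (X : pset) :
  W X -> (forall p, X p -> p.1 < M) -> exists a, W (fun p => X p /\ p.1 = a).
Proof.
elim: M X => [|M IH] X WX XM.
  by case: (uf_proper W_uf); apply: (uf_up W_uf) WX => p /XM.
have [WM|WnM] := uf_ultra W_uf (fun p => p.1 = M).
  by exists M; exact (uf_cap W_uf WX WM).
have [|a Wa] := IH _ (uf_cap W_uf WX WnM) => [p [/XM]|]; first lia.
by exists a; apply: (uf_up W_uf) Wa => p [[]].
Qed.

Lemma large_set_infinite_columns (H : pset) :
  non_P_point_std W -> W H -> forall M, exists a, M <= a /\ infinite_column H a.
Proof.
move=> W_np WH M; apply: NNPP => no_column.
have finite_col a : M <= a -> exists m, forall b, m <= b -> ~ H (a, b).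
  move=> Ma; have /not_all_ex_not[m hm] : ~ infinite_column H a.
    by move=> col; apply: no_column; exists a.
  by exists m => b mb Hab; apply: hm; exists b.
have [WhiM|WloM] := uf_ultra W_uf (fun p => H p /\ M <= p.1).
  case: (W_np _ WhiM) => _; apply=> a; have [Ma|aM] := leqP M a.
    have [m hm] := finite_col a Ma; exists m => -[a' b] [Hab _] /= a'a.
    by rewrite ltnNge; apply/negP => /hm; rewrite -a'a.
  by exists 0 => p [_ Mp] pa; lia.
have WloM' : W (fun p => H p /\ p.1 < M).
  apply: (uf_up W_uf) (uf_cap W_uf WH WloM) => p [Hp nM]; split=> //.
  by rewrite ltnNge; apply/negP => Mp; apply: nM.
have [a Wa] := ultrafilter_column WloM' (fun p => @proj2 _ _).
by case: (W_np _ Wa) => + _; apply; exists a => p [].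
Qed.

End Columns.

Definition lexle : rel point := fun p q => lexlt p q || (p == q).

Lemma lexle_total : total lexle.
Proof. by move=> [a b] [c d]; rewrite /lexle /lexlt /= !xpair_eqE /=; lia. Qed.

Lemma nsubset_sort n (S : pset) (t : seq point) :
  uniq t -> size t = n -> (forall x, x \in t -> S x) -> nsubset n S (sort lexle t).
Proof.
move=> t_uniq t_size tS; split; last 2 first.
- by rewrite size_sort.
- by move=> x; rewrite mem_sort; apply: tS.
have : uniq (sort lexle t) by rewrite sort_uniq.
case: (sort lexle t) (sort_sorted lexle_total t) => // x s.
elim: s x => // y s IH x /= /andP[xy ys] /andP[xys us].
have -> : path lexlt y s := IH y ys us.
rewrite andbT; move: xy xys; rewrite /lexle inE.
by case: (lexlt x y) => //= /eqP ->; rewrite eqxx.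
Qed.

Section Realization.
Variables (n : nat) (r : ntype_rel n) (H : pset).
Hypothesis r_ntype : is_ntype r.
Hypothesis H_columns : forall M, exists a, M <= a /\ infinite_column H a.

Local Notation rk := (ntype_rank r).

(* Rank k holds either x-symbols only, to be sent to a fresh infinite column,
   or a single y-symbol y_j, to be sent to a point of H high up in the column
   chosen for x_j. *)
Lemma rank_value (f : nat -> nat) (k m : nat) :
  (forall i : 'I_n, rk (inl i) < k -> infinite_column H (f (rk (inl i)))) ->
  exists v, [/\ m <= v,
    forall i : 'I_n, rk (inl i) = k -> infinite_column H v &
    forall j : 'I_n, rk (inr j) = k -> H (f (rk (inl j)), v)].
Proof.
move=> f_col.
have [/existsP[j /eqP jk]|no_y] := boolP [exists j : 'I_n, rk (inr j) == k].
  have [b [mb Hb]] := f_col j (leq_trans (ntype_rank_x_lt_y r_ntype j) (eq_leq jk)) m.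
  exists b; split=> // [i ik|j' j'k].
    by have := ntype_rank_inl_inr r_ntype i j; rewrite ik jk eqxx.
  by rewrite (@ntype_rank_inr_inj _ _ r_ntype j' j) // j'k jk.
have [a [ma col]] := H_columns m; exists a; split=> // j jk.
by case/existsP: no_y; exists j; apply/eqP.
Qed.

Lemma rank_embedding k : exists f : nat -> nat,
  [/\ forall i j, i < j < k -> f i < f j,
      forall i : 'I_n, rk (inl i) < k -> infinite_column H (f (rk (inl i))) &
      forall j : 'I_n, rk (inr j) < k -> H (f (rk (inl j)), f (rk (inr j)))].
Proof.
elim: k => [|k [f [f_mono f_col f_H]]]; first by exists id; split=> *; lia.
pose m := \max_(i < k) (f i).+1.
have f_lt_m i : i < k -> f i < m by move=> ik; exact: (leq_bigmax (Ordinal ik)).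
have [v [mv v_col v_H]] := rank_value m f_col.
exists (fun i => if i == k then v else f i); split.
- move=> i j /andP[ij jk]; rewrite ifN; last by lia.
  case: eqP => [_|/eqP jk']; last by apply: f_mono; lia.
  by apply: leq_trans mv; apply: f_lt_m; lia.
- move=> i; case: eqP => [ik _|nik ik]; first exact: v_col ik.
  by apply: f_col; lia.
- move=> j jk; have xy := ntype_rank_x_lt_y r_ntype j.
  rewrite ifN; last by lia.
  case: eqP => [jk'|njk]; first exact: v_H jk'.
  by apply: f_H; lia.
Qed.

Lemma ntype_realized : exists s, nsubset n H s /\ realizes r s.
Proof.
have rk_lt a : rk a < #|{: sym n}|.+1 by rewrite ltnS max_card.
have [f [f_mono _ f_H]] := rank_embedding #|{: sym n}|.+1.
have f_le a b : (f (rk a) <= f (rk b)) = (rk a <= rk b).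
  have [ab|ba|->] := ltngtP (rk a) (rk b); last by rewrite !leqnn.
    by apply/ltnW/f_mono; rewrite ab rk_lt.
  by apply/negbTE; rewrite -ltnNge; apply: f_mono; rewrite ba rk_lt.
pose t := [seq (f (rk (inl j)), f (rk (inr j))) | j <- enum 'I_n].
have t_sorted : sorted (fun p q : point => p.2 < q.2) t.
  have enum_sorted : sorted (fun i j : 'I_n => i < j) (enum 'I_n).
    by have := iota_ltn_sorted 0 n; rewrite -val_enum_ord sorted_map.
  rewrite sorted_map; apply: sub_sorted enum_sorted => i j /= ij.
  by rewrite ltnNge f_le -ltnNge; apply: ntype_rank_y_lt.
have t_val a : sym_val t a = f (rk a).
  by case: a => i /=; rewrite (nth_map i) ?size_enum_ord // nth_ord_enum.
exists (sort lexle t); split.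
  apply: nsubset_sort; last by move=> _ /mapP[j _ ->]; apply: f_H.
    apply: (sorted_uniq _ _ t_sorted) => [q p u|p] /=; last exact: ltnn.
    exact: ltn_trans.
  by rewrite size_map size_enum_ord.
exists t; split=> // [|a b]; first by rewrite perm_sort.
by rewrite !t_val f_le ntype_le_rank.
Qed.

End Realization.

Definition realizes_every_ntype n (H : pset) : Prop :=
  forall r : ntype_rel n, is_ntype r -> exists s, nsubset n H s /\ realizes r s.

Lemma realizes_uniq n (r1 r2 : ntype_rel n) s :
  realizes r1 s -> realizes r2 s -> r1 = r2.
Proof.
move=> [t1 [p1 o1 e1]] [t2 [p2 o2 e2]].
have t12 : t1 = t2.
  apply: (irr_sorted_eq _ _ o1 o2) => [q p u|p|p] /=; first exact: ltn_trans.
    exact: ltnn.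
  by rewrite -(perm_mem p1) -(perm_mem p2).
by apply/ffunP => -[a b]; rewrite e1 e2 t12.
Qed.

Definition type_of n (s : seq point) : ntype_rel n :=
  epsilon (inhabits [ffun=> true]) (fun r => realizes r s).

Lemma type_ofE n (r : ntype_rel n) s : realizes r s -> type_of n s = r.
Proof.
move=> rs; have realizable : exists r' : ntype_rel n, realizes r' s by exists r.
exact: realizes_uniq (epsilon_spec _ _ realizable) rs.
Qed.

Section Counting.
Variables (n k : nat) (tau : ntype_rel n) (c : seq point -> 'I_k) (H : pset).

Definition type_colour (s : seq point) : ntype_rel n * option 'I_k :=
  (type_of n s, if type_of n s == tau then Some (c s) else None).

Lemma type_colours_exceed_types (C : {set ntype_rel n * option 'I_k}) s1 s2 :
  (forall s, nsubset n H s -> type_colour s \in C) ->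
  realizes_every_ntype n H ->
  nsubset n H s1 -> realizes tau s1 -> nsubset n H s2 -> realizes tau s2 ->
  c s1 != c s2 -> T n < #|C|.
Proof.
move=> HC all_types Hs1 tau_s1 Hs2 tau_s2 c12.
pose g r : ntype_rel n * option 'I_k := (r, if r == tau then Some (c s1) else None).
have g_inj : injective g by apply: (can_inj (g := fst)).
have image_sub : (tau, Some (c s2)) |: [set g r | r in [pred r | is_ntype r]] \subset C.
  apply/subsetP => x; rewrite in_setU1 => /predU1P[->|/imsetP[r r_ntype ->]].
    by have := HC _ Hs2; rewrite /type_colour (type_ofE tau_s2) eqxx.
  have [s [Hs rs]] := all_types r r_ntype.
  have [-> | r_tau] := eqVneq r tau.
    by have := HC _ Hs1; rewrite /g /type_colour (type_ofE tau_s1) eqxx.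
  by have := HC _ Hs; rewrite /g /type_colour (type_ofE rs) (negbTE r_tau).
have fresh : (tau, Some (c s2)) \notin [set g r | r in [pred r | is_ntype r]].
  apply/imsetP => -[r _]; rewrite /g => -[<-]; rewrite eqxx => -[/eqP].
  by rewrite eq_sym (negbTE c12).
rewrite /T -(card_imset _ g_inj); apply: leq_trans (subset_leq_card image_sub).
by rewrite cardsU1 fresh.
Qed.

End Counting.

Theorem mainTheorem2 (n : nat) (W : pset -> Prop) :
  1 <= n ->
  ultrafilter W -> nonprincipal W -> non_P_point_std W ->
  weakly_ramsey n (T n) W ->
  forall tau : ntype_rel n, is_ntype tau ->
  forall (k : nat) (c : seq point -> 'I_k),
    exists H : pset, W H /\
      exists i : 'I_k, forall s, nsubset n H s -> realizes tau s -> c s = i.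
Proof.
move=> _ W_uf _ W_np W_ramsey tau tau_ntype k c.
have [H [WH [C [C_small HC]]]] :=
  W_ramsey _ (fun s => enum_rank (type_colour tau c s)).
have H_columns := large_set_infinite_columns W_uf W_np WH.
have all_types : realizes_every_ntype n H.
  by move=> r r_ntype; exact: ntype_realized r_ntype H_columns.
have [s0 [Hs0 tau_s0]] := all_types _ tau_ntype.
exists H; split=> //; exists (c s0) => s Hs tau_s; apply/eqP; apply: contraT => c_ne.
have HC' s' : nsubset n H s' -> type_colour tau c s' \in enum_val @: C.
  by move=> /HC C_s'; rewrite -[type_colour _ _ _]enum_rankK imset_f.
have := type_colours_exceed_types HC' all_types Hs tau_s Hs0 tau_s0 c_ne.
by rewrite ltnNge (leq_trans (leq_imset_card _ _) C_small).
Qed.
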